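(* Let $\alpha$ be a composition, $w\in CRHW_n$ with $w(\alpha)=\beta\neq0$, $\tau=\tau_w$, and let $j\ge1$ belong to $\mathrm{supp}(w)$ but not be its maximum. If $j\in\mathrm{leg}(w)$, then (i) the greatest entry of $\tau$ in column $j$ is strictly greater than the greatest entry of $\tau$ in column $j+1$, and (ii) every other entry of $\tau$ in column $j$ is strictly smaller than the smallest entry of $\tau$ in column $j+1$.
   Context: Box-adding operators on compositions $\alpha=(\alpha_1,\dots,\alpha_k)$: $\mathfrak t_1(\alpha)=(1,\alpha_1,\dots,\alpha_k)$ (a new row on top); for $i\ge2$, $\mathfrak t_i(\alpha)$ increases the leftmost part equal to $i-1$ by $1$ (adding a box in column $i$), and is $0$ if there is no such part; $\mathfrak t_i(0)=0$. Diagrams: row $i$ has $\alpha_i$ left-justified boxes, rows numbered top to bottom. A word $w=\mathfrak t_{i_1}\cdots\mathfrak t_{i_n}$ acts by $w(\alpha)=\mathfrak t_{i_1}(\cdots\mathfrak t_{i_n}(\alpha))$. It is a reverse $k$-hookword if $i_1\le\cdots\le i_{k+1}>i_{k+2}>\cdots>i_n$ ($0\le k\le n-1$), and then $\mathrm{leg}(w)=\{i_{k+1},\dots,i_n\}$. $\mathrm{supp}(w)=\{i_1,\dots,i_n\}$; $w$ is connected if $\mathrm{supp}(w)$ is a set of consecutive integers; $CRHW_n$ is the set of connected reverse hookwords of length $n$. If $w(\alpha)=\beta\ne0$, applying $\mathfrak t_{i_n},\dots,\mathfrak t_{i_1}$ successively adds one box at each step (the box added by $\mathfrak t_{i_m}$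 is in column $i_m$); $\tau_w$ is the filling of the set of added boxes in which the box added by $\mathfrak t_{i_m}$ has entry $m$. *)

From mathcomp Require Import all_boot.
Set Implicit Arguments. Unset Strict Implicit. Unset Printing Implicit Defensive.

(* Compositions: finite sequences of positive integers (row 1 first). *)
Definition is_composition (a : seq nat) : bool := all (fun x => 0 < x) a.

(* Box-adding operator t_i; [None] plays the role of 0.
   t_1 a = 1 :: a ; for i >= 2, increase the leftmost part equal to i-1. *)
Definition top (i : nat) (a : seq nat) : option (seq nat) :=
  if i == 0 then None
  else if i == 1 then Some (1 :: a)
  else let r := find (pred1 i.-1) a in
       if r < size a then Some (set_nth 0 a r i) else None.

(* w = t_{i_1} ... t_{i_n}, acting by w(a) = t_{i_1}( ... t_{i_n}(a)). *)
Definition word_act (w : seq nat) (a : seq nat) : option (seq nat) :=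
  foldr (fun i oa => obind (top i) oa) (Some a) w.

(* Boxes of a filling: ((row, column), entry), rows numbered 1,2,... top to
   bottom, columns 1,2,... left to right. *)
Definition box := (nat * nat * nat)%type.

Definition shift_entry (b : box) : box := (b.1, b.2.+1).
Definition shift_row (b : box) : box := ((b.1.1.+1, b.1.2), b.2).

(* [fill w a] simulates applying t_{i_n}, ..., t_{i_1} to a, recording the
   added boxes; the box added by t_{i_m} gets entry m (positions in w are
   1-indexed). *)
Fixpoint fill (w : seq nat) (a : seq nat) : option (seq nat * seq box) :=
  match w with
  | [::] => Some (a, [::])
  | i :: w' =>
      match fill w' a with
      | None => None
      | Some (b, bs) =>
          let bs' := map shift_entry bs in
          if i == 0 then None
          else if i == 1 then Some (1 :: b, ((1, 1), 1) :: map shift_row bs')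
          else let r := find (pred1 i.-1) b in
               if r < size b then Some (set_nth 0 b r i, ((r.+1, i), 1) :: bs')
               else None
      end
  end.

(* tau_w : the filling of the added boxes (empty if w(a) = 0). *)
Definition tau (w : seq nat) (a : seq nat) : seq box :=
  if fill w a is Some (_, T) then T else [::].

Definition col_entries (T : seq box) (j : nat) : seq nat :=
  [seq b.2 | b <- T & b.1.2 == j].

(* w is a reverse k-hookword: i_1 <= ... <= i_{k+1} > i_{k+2} > ... > i_n,
   with 0 <= k <= n-1. *)
Definition is_rhw (k : nat) (w : seq nat) : bool :=
  [&& k < size w, sorted leq (take k.+1 w) & sorted (fun x y => y < x) (drop k w)].

Definition in_leg (j : nat) (w : seq nat) : Prop :=
  exists k, is_rhw k w /\ j \in drop k w.

Definition connected (w : seq nat) : Prop :=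
  forall a b m, a \in w -> b \in w -> a <= m <= b -> m \in w.

(* CRHW_n : connected reverse hookwords of length n (letters are operator
   indices, hence >= 1). *)
Definition CRHW (n : nat) (w : seq nat) : Prop :=
  [/\ size w = n, all (fun i => 0 < i) w, connected w & exists k, is_rhw k w].

(* Entry e of tau_w sits in column j exactly when the e-th letter of w is j,
   so the statement is about the positions of the letters j and j+1 in w.
   Since j lies in the strictly decreasing leg, it occurs there exactly once,
   at some position p, and every other occurrence of j lies in the weakly
   increasing head.  An occurrence of j+1 in the leg must precede p, and one
   in the head must follow every occurrence of j in the head; hence p is the
   largest entry in column j, larger than all entries in column j+1, which in
   turn exceed the remaining entries of column j. *)

From mathcomp Require Import all_boot.

Set Implicit Arguments.
Unset Strict Implicit.
Unset Printing Implicit Defensive.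

Definition occurrences (j : nat) (w : seq nat) : seq nat :=
  [seq m <- iota 0 (size w) | nth 0 w m == j].

Lemma mem_occurrences j w m :
  (m \in occurrences j w) = (m < size w) && (nth 0 w m == j).
Proof. by rewrite mem_filter mem_iota andbC. Qed.

Lemma occurrences_cons j i w :
  occurrences j (i :: w) =
  if i == j then 0 :: map S (occurrences j w) else map S (occurrences j w).
Proof.
by rewrite /occurrences /= -add1n iotaDl filter_map; case: ifP.
Qed.

Lemma fill_word_act w a : omap fst (fill w a) = word_act w a.
Proof.
elim: w => [|i w IH] //=; rewrite -IH.
case: (fill w a) => [[b bs]|] //=.
by rewrite /top; case: ifP => // _; case: ifP => // _; case: ifP.
Qed.

Lemma col_entries_cons c e bs j :
  col_entries ((c, e) :: bs) j =
  if c.2 == j then e :: col_entries bs j else col_entries bs j.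
Proof. by rewrite /col_entries /=; case: ifP. Qed.

Lemma col_entries_shift_entry bs j :
  col_entries (map shift_entry bs) j = map S (col_entries bs j).
Proof. by rewrite /col_entries filter_map -!map_comp. Qed.

Lemma col_entries_shift_row bs j :
  col_entries (map shift_row bs) j = col_entries bs j.
Proof. by rewrite /col_entries filter_map -map_comp. Qed.

(* The entries are 1-indexed positions in w, whence the shift by one. *)
Lemma col_entries_fill w a b T j :
  fill w a = Some (b, T) -> col_entries T j = map S (occurrences j w).
Proof.
elim: w b T => [|i w IH] b T /=; first by case=> _ <-.
case E: (fill w a) => [[b' bs]|] //.
rewrite occurrences_cons -(IH _ _ E).
case: ifP => // _; case: ifP => [/eqP-> | _].
  case=> _ <-; rewrite col_entries_cons col_entries_shift_row.
  by rewrite col_entries_shift_entry /=; case: ifP.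
case: ifP => // _ [_ <-].
by rewrite col_entries_cons col_entries_shift_entry /=; case: ifP.
Qed.

Section ReverseHookword.

Variables (k : nat) (w : seq nat).
Hypothesis rhw_kw : is_rhw k w.

Lemma rhw_head_nondecreasing m q : m <= q -> q <= k -> nth 0 w m <= nth 0 w q.
Proof.
case/and3P: rhw_kw => k_lt sorted_head _ le_mq le_qk.
have size_head : size (take k.+1 w) = k.+1 by exact: size_takel.
have in_head x : x <= k -> x \in [pred n | n < size (take k.+1 w)].
  by rewrite inE size_head ltnS.
have le_mk := leq_trans le_mq le_qk.
have := sorted_leq_nth leq_trans leqnn 0 sorted_head m q
          (in_head _ le_mk) (in_head _ le_qk) le_mq.
by rewrite !nth_take ?ltnS.
Qed.

Lemma rhw_leg_decreasing m q :
  k <= m -> m < q -> q < size w -> nth 0 w q < nth 0 w m.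
Proof.
case/and3P: rhw_kw => _ _ sorted_leg le_km lt_mq lt_qw.
have gt_trans : transitive (fun x y : nat => y < x).
  by move=> y x z lt_yx lt_zy; exact: ltn_trans lt_zy lt_yx.
have le_kq := leq_trans le_km (ltnW lt_mq).
have in_leg x : k <= x -> x < size w -> x - k \in [pred n | n < size (drop k w)].
  by move=> le_kx lt_xw; rewrite inE size_drop ltn_sub2r ?(leq_ltn_trans le_kx).
have := sorted_ltn_nth gt_trans 0 sorted_leg (m - k) (q - k)
          (in_leg m le_km (ltn_trans lt_mq lt_qw)) (in_leg q le_kq lt_qw)
          (ltn_sub2r (leq_ltn_trans le_km lt_mq) lt_mq).
by rewrite !nth_drop !subnKC.
Qed.

Variables (j p : nat).
Hypotheses (le_kp : k <= p) (lt_pw : p < size w) (wp_j : nth 0 w p = j).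

Lemma rhw_occurrence_off_leg m : m \in occurrences j w -> m != p -> m < k.
Proof.
rewrite mem_occurrences => /andP[lt_mw /eqP wm_j] ne_mp.
rewrite ltnNge; apply/negP => le_km.
case: (ltngtP m p) => [lt_mp | lt_pm | eq_mp]; last by rewrite eq_mp eqxx in ne_mp.
  by have := rhw_leg_decreasing le_km lt_mp lt_pw; rewrite wm_j wp_j ltnn.
by have := rhw_leg_decreasing le_kp lt_pm lt_mw; rewrite wm_j wp_j ltnn.
Qed.

Lemma rhw_occurrence_succ_before q : q \in occurrences j.+1 w -> q < p.
Proof.
rewrite mem_occurrences => /andP[lt_qw /eqP wq_j1].
case: (ltnP q k) => [lt_qk | le_kq]; first exact: leq_trans lt_qk le_kp.
case: (ltngtP q p) => [// | lt_pq | eq_qp].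
  by have := rhw_leg_decreasing le_kp lt_pq lt_qw; rewrite wq_j1 wp_j ltnNge leqnSn.
by move: wq_j1; rewrite eq_qp wp_j => /n_Sn.
Qed.

Lemma rhw_occurrence_head_before_succ m q :
  m < k -> m \in occurrences j w -> q \in occurrences j.+1 w -> m < q.
Proof.
move=> lt_mk; rewrite !mem_occurrences => /andP[_ /eqP wm_j] /andP[_ /eqP wq_j1].
case: (ltnP q k) => [lt_qk | le_kq]; last exact: leq_trans lt_mk le_kq.
rewrite ltnNge; apply/negP => le_qm.
by have := rhw_head_nondecreasing le_qm (ltnW lt_mk); rewrite wm_j wq_j1 ltnn.
Qed.

End ReverseHookword.

Lemma bigmax_eq_seq (s : seq nat) x :
  x \in s -> (forall y, y \in s -> y <= x) -> \max_(y <- s) y = x.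
Proof.
move=> s_x le_s_x; apply/eqP; rewrite eqn_leq leq_bigmax_seq // andbT.
by apply/bigmax_leqP_seq => y s_y _; exact: le_s_x.
Qed.

Theorem mainTheorem9 (alpha beta : seq nat) (n : nat) (w : seq nat) (j : nat) :
  is_composition alpha ->
  CRHW n w ->
  word_act w alpha = Some beta ->
  1 <= j -> j \in w -> j < \max_(i <- w) i ->
  in_leg j w ->
  let cj := col_entries (tau w alpha) j in
  let cj1 := col_entries (tau w alpha) j.+1 in
  \max_(e <- cj1) e < \max_(e <- cj) e /\
  (forall e, e \in cj -> e != \max_(x <- cj) x ->
     forall f, f \in cj1 -> e < f).
Proof.
move=> _ _ act_w _ _ _ [k [rhw_kw leg_j]] cj cj1.
rewrite -fill_word_act in act_w.
case fill_w: (fill w alpha) act_w => [[b T]|] // _.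
have col_tau i : col_entries (tau w alpha) i = map S (occurrences i w).
  by rewrite /tau fill_w (col_entries_fill _ fill_w).
rewrite {}/cj {}/cj1 !col_tau.
case/(nthP 0): leg_j => i; rewrite size_drop nth_drop ltn_subRL => lt_pw wp_j.
have occ_p : k + i \in occurrences j w by rewrite mem_occurrences lt_pw wp_j eqxx.
have off_leg := rhw_occurrence_off_leg rhw_kw (leq_addr i k) lt_pw wp_j.
have succ_before := rhw_occurrence_succ_before rhw_kw (leq_addr i k) wp_j.
have max_cj : \max_(x <- map S (occurrences j w)) x = (k + i).+1.
  apply: bigmax_eq_seq => [|_ /mapP[m occ_m ->]]; first exact: map_f occ_p.
  have [-> // | ne_mp] := eqVneq m (k + i).
  by rewrite ltnS ltnW // (leq_trans (off_leg m occ_m ne_mp) (leq_addr i k)).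
rewrite max_cj; split.
  by rewrite ltnS; apply/bigmax_leqP_seq => _ /mapP[q /succ_before lt_qp ->].
move=> _ /mapP[m occ_m ->]; rewrite eqSS => ne_mp _ /mapP[q occ_q ->].
rewrite ltnS; apply: (rhw_occurrence_head_before_succ rhw_kw _ occ_m occ_q).
exact: off_leg occ_m ne_mp.
Qed.
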